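(* Let $0<f_1<f_2<f_3$, let $2h=1$, and on $M_h$ let $F_L=\ell_{12}^2+\ell_{13}^2+\ell_{14}^2$ and $J_1=1-\sqrt{1-F_L}$. Then $J_1$ is an almost global $S^1$-action on $M_h$.
   Context: $\mathbf L=(\ell_{12},\ell_{13},\ell_{14},\ell_{23},\ell_{24},\ell_{34})\in\mathbb R^6\cong\mathfrak{so}(4)^*$ with the Lie–Poisson bracket of $\mathfrak{so}(4)$ (extending $\ell_{ji}=-\ell_{ij}$: $\{\ell_{ij},\ell_{jk}\}=-\ell_{ik}$ for distinct $i,j,k$, and $\{\ell_{ij},\ell_{kl}\}=0$ when $\{i,j\}\cap\{k,l\}=\emptyset$). $M_h=\{\mathbf L:\sum_{i<j}\ell_{ij}^2=2h,\ \ell_{12}\ell_{34}-\ell_{13}\ell_{24}+\ell_{14}\ell_{23}=0\}\cong S^2\times S^2$. Together with $G_L=f_1\ell_{34}^2+f_2\ell_{24}^2+f_3\ell_{23}^2$, $F_L$ forms the reduced Lamé integrable system. A function is an almost global $S^1$-action if its Hamiltonian vector field generates a $2\pi$-periodic flow (an $S^1$-action) everywhere except on the preimage of an isolated point of the image of the momentum map, where the function fails to be smooth / the vector field is undefined (here the set $F_L=1$, i.e. $\ell_{23}=\ell_{24}=\ell_{34}=0$). *)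

From Stdlib Require Import Reals List.
From Coquelicot Require Import Coquelicot.
Import ListNotations.
Open Scope R_scope.

(* A point L = (l12,l13,l14,l23,l24,l34) of R^6 ~ so(4)^*. *)
Record L6 := mkL6 { l12 : R; l13 : R; l14 : R; l23 : R; l24 : R; l34 : R }.

Definition ell (L : L6) (i j : nat) : R :=
  match i, j with
  | 1, 2 => l12 L | 1, 3 => l13 L | 1, 4 => l14 L
  | 2, 3 => l23 L | 2, 4 => l24 L | 3, 4 => l34 L
  | 2, 1 => - l12 L | 3, 1 => - l13 L | 4, 1 => - l14 L
  | 3, 2 => - l23 L | 4, 2 => - l24 L | 4, 3 => - l34 L
  | _, _ => 0
  end.

Definition kd (i j : nat) : R := if Nat.eqb i j then 1 else 0.

(* Lie-Poisson bracket of so(4)^* on the coordinate functions: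
   {l_ab, l_cd} = -(d_bc l_ad - d_bd l_ac - d_ac l_bd + d_ad l_bc),
   which is the bilinear extension of {l_ij, l_jk} = - l_ik (i,j,k distinct),
   {l_ij, l_kl} = 0 for disjoint index pairs, with l_ji = - l_ij. *)
Definition LP (L : L6) (a b c d : nat) : R :=
  - (kd b c * ell L a d - kd b d * ell L a c - kd a c * ell L b d + kd a d * ell L b c).

Definition pairs : list (nat * nat) := [(1,2);(1,3);(1,4);(2,3);(2,4);(3,4)]%nat.

Definition upd (L : L6) (i j : nat) (t : R) : L6 :=
  match i, j with
  | 1, 2 => mkL6 (l12 L + t) (l13 L) (l14 L) (l23 L) (l24 L) (l34 L)
  | 1, 3 => mkL6 (l12 L) (l13 L + t) (l14 L) (l23 L) (l24 L) (l34 L)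
  | 1, 4 => mkL6 (l12 L) (l13 L) (l14 L + t) (l23 L) (l24 L) (l34 L)
  | 2, 3 => mkL6 (l12 L) (l13 L) (l14 L) (l23 L + t) (l24 L) (l34 L)
  | 2, 4 => mkL6 (l12 L) (l13 L) (l14 L) (l23 L) (l24 L + t) (l34 L)
  | 3, 4 => mkL6 (l12 L) (l13 L) (l14 L) (l23 L) (l24 L) (l34 L + t)
  | _, _ => L
  end.

Definition partial (f : L6 -> R) (L : L6) (i j : nat) : R :=
  Derive (fun t => f (upd L i j t)) 0.

(* Hamiltonian vector field of f, component (a,b):  d l_ab / dt = {l_ab, f}
   = sum_{c<d} {l_ab, l_cd} * df/dl_cd. *)
Definition hvf (f : L6 -> R) (L : L6) (a b : nat) : R :=
  fold_right Rplus 0 (map (fun p => LP L a b (fst p) (snd p) * partial f L (fst p) (snd p)) pairs).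

Definition integral_at (f : L6 -> R) (gamma : R -> L6) (t : R) : Prop :=
  forall p, In p pairs ->
    is_derive (fun s => ell (gamma s) (fst p) (snd p)) t (hvf f (gamma t) (fst p) (snd p)).

Definition M_h (h : R) (L : L6) : Prop :=
  l12 L ^ 2 + l13 L ^ 2 + l14 L ^ 2 + l23 L ^ 2 + l24 L ^ 2 + l34 L ^ 2 = 2 * h /\
  l12 L * l34 L - l13 L * l24 L + l14 L * l23 L = 0.

Definition F_L (L : L6) : R := l12 L ^ 2 + l13 L ^ 2 + l14 L ^ 2.

Definition G_L (f1 f2 f3 : R) (L : L6) : R :=
  f1 * l34 L ^ 2 + f2 * l24 L ^ 2 + f3 * l23 L ^ 2.

Definition J1 (L : L6) : R := 1 - sqrt (1 - F_L L).

(* f is an almost global S^1-action on M_h, singular exactly on the set S: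
   through every point of M_h outside S there is a unique complete integral
   curve of X_f; it stays in M_h \ S and is 2*PI-periodic. *)
Definition almost_global_S1 (h : R) (f : L6 -> R) (S : L6 -> Prop) : Prop :=
  forall L0, M_h h L0 -> ~ S L0 ->
    exists gamma : R -> L6,
      gamma 0 = L0 /\
      (forall t, integral_at f gamma t) /\
      (forall t, M_h h (gamma t) /\ ~ S (gamma t)) /\
      (forall t, gamma (t + 2 * PI) = gamma t) /\
      (forall delta : R -> L6, delta 0 = L0 -> (forall t, integral_at f delta t) ->
         forall t, delta t = gamma t).

(** The Hamiltonian vector field of [J1] only moves [x = (l12, l13, l14)]; on
    [F_L < 1] it is [x' = x × omega] with [omega = (l34, -l24, l23) / sqrt (1 - F_L)].
    On [M_h] with [2h = 1] the vector [omega] is a unit vector orthogonal to [x], so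
    the flow is the rotation [x(t) = cos t x + sin t (x × omega)], of period [2 PI].
    Uniqueness: along any integral curve the Casimir [|L|^2] is conserved, so
    [F_L <= 1]; hence [F_L] is constant (its derivative vanishes where [F_L < 1], and
    points with [F_L = 1] are maxima), so [omega] is constant and two solutions of
    the linear equation [x' = x × omega] with the same initial value have constant,
    hence zero, distance. *)

From Stdlib Require Import Reals Lra Nsatz.
From Coquelicot Require Import Coquelicot.
Open Scope R_scope.

Lemma is_derive_0_const (f : R -> R) :
  (forall x, is_derive f x 0) -> forall t, f t = f 0.
Proof.
  intros Hf t.
  destruct (Rtotal_order t 0) as [Ht | [-> | Ht]].
  - apply eq_is_derive; auto.
  - reflexivity.
  - symmetry; apply eq_is_derive; auto.
Qed.

Lemma is_derive_at_max (f : R -> R) (c l : R) :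
  is_derive f c l -> (forall x, f x <= f c) -> l = 0.
Proof.
  intros Hf Hmax.
  pose proof (proj1 (is_derive_Reals f c l) Hf) as Hlim.
  exact (deriv_maximum f (c - 1) (c + 1) c (exist _ l Hlim)
           ltac:(lra) ltac:(lra) (fun x _ _ => Hmax x)).
Qed.

Lemma is_derive_sum_sq3 (u v w : R -> R) (du dv dw t : R) :
  is_derive u t du -> is_derive v t dv -> is_derive w t dw ->
  is_derive (fun s => u s ^ 2 + v s ^ 2 + w s ^ 2) t (2 * (u t * du + v t * dv + w t * dw)).
Proof.
  intros Hu Hv Hw.
  auto_derive; [repeat split; eexists; eauto |].
  change (fun x : R => ?f x) with f.
  rewrite (is_derive_unique u _ _ Hu), (is_derive_unique v _ _ Hv), (is_derive_unique w _ _ Hw).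
  ring.
Qed.

Definition skew_solution (p q r : R) (u v w : R -> R) : Prop :=
  forall t, is_derive u t (p * v t + q * w t) /\
            is_derive v t (- p * u t + r * w t) /\
            is_derive w t (- q * u t - r * v t).

Lemma skew_solution_unique p q r u1 v1 w1 u2 v2 w2 :
  skew_solution p q r u1 v1 w1 -> skew_solution p q r u2 v2 w2 ->
  u1 0 = u2 0 -> v1 0 = v2 0 -> w1 0 = w2 0 ->
  forall t, u1 t = u2 t /\ v1 t = v2 t /\ w1 t = w2 t.
Proof.
  intros H1 H2 Hu Hv Hw.
  pose (dist2 t := (u1 t - u2 t) ^ 2 + (v1 t - v2 t) ^ 2 + (w1 t - w2 t) ^ 2).
  assert (Hconst : forall t, dist2 t = dist2 0).
  { apply is_derive_0_const; intros t.
    destruct (H1 t) as (Hu1 & Hv1 & Hw1); destruct (H2 t) as (Hu2 & Hv2 & Hw2).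
    pose proof (is_derive_sum_sq3 _ _ _ _ _ _ t (is_derive_minus _ _ _ _ _ Hu1 Hu2)
                  (is_derive_minus _ _ _ _ _ Hv1 Hv2) (is_derive_minus _ _ _ _ _ Hw1 Hw2)) as Hd.
    match type of Hd with is_derive _ _ ?v =>
      replace 0 with v by (unfold minus, plus, opp; simpl; ring) end.
    exact Hd. }
  intros t; specialize (Hconst t); unfold dist2 in Hconst.
  rewrite Hu, Hv, Hw in Hconst.
  pose proof (pow2_ge_0 (u1 t - u2 t)); pose proof (pow2_ge_0 (v1 t - v2 t)).
  pose proof (pow2_ge_0 (w1 t - w2 t)).
  repeat split; nra.
Qed.

Lemma skew_rotation_norm (x y z p q r c s : R) :
  p ^ 2 + q ^ 2 + r ^ 2 = 1 -> x * r - y * q + z * p = 0 -> c ^ 2 + s ^ 2 = 1 ->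
  (c * x + s * (p * y + q * z)) ^ 2 + (c * y + s * (- p * x + r * z)) ^ 2
  + (c * z + s * (- q * x - r * y)) ^ 2 = x ^ 2 + y ^ 2 + z ^ 2.
Proof.
  intros Hw Hperp Hcs.
  transitivity ((x ^ 2 + y ^ 2 + z ^ 2) * (c ^ 2 + s ^ 2) + s ^ 2 *
    ((p ^ 2 + q ^ 2 + r ^ 2 - 1) * (x ^ 2 + y ^ 2 + z ^ 2) - (x * r - y * q + z * p) ^ 2)).
  - ring.
  - rewrite Hw, Hperp, Hcs; ring.
Qed.

Lemma L6_ext L M :
  l12 L = l12 M -> l13 L = l13 M -> l14 L = l14 M ->
  l23 L = l23 M -> l24 L = l24 M -> l34 L = l34 M -> L = M.
Proof. destruct L, M; simpl; intros; subst; reflexivity. Qed.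

Definition casimir (L : L6) : R := F_L L + (l23 L ^ 2 + l24 L ^ 2 + l34 L ^ 2).

Lemma casimir_M_h h L : M_h h L -> casimir L = 2 * h.
Proof. intros [Hnorm _]; unfold casimir, F_L; lra. Qed.

Lemma F_L_le_casimir L : F_L L <= casimir L.
Proof.
  unfold casimir.
  pose proof (pow2_ge_0 (l23 L)); pose proof (pow2_ge_0 (l24 L)); pose proof (pow2_ge_0 (l34 L)).
  lra.
Qed.

(* The partial derivatives are arbitrary here: only the antisymmetry of the bracket matters. *)
Lemma hvf_casimir f L :
  2 * (l12 L * hvf f L 1 2 + l13 L * hvf f L 1 3 + l14 L * hvf f L 1 4) +
  2 * (l23 L * hvf f L 2 3 + l24 L * hvf f L 2 4 + l34 L * hvf f L 3 4) = 0.
Proof. unfold hvf, LP, kd, ell; simpl; ring. Qed.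

Section IntegralCurve.

Variables (f : L6 -> R) (gamma : R -> L6) (t : R).
Hypothesis Hgamma : integral_at f gamma t.

Lemma integral_at_l12 : is_derive (fun s => l12 (gamma s)) t (hvf f (gamma t) 1 2).
Proof. exact (Hgamma (1, 2)%nat ltac:(simpl; tauto)). Qed.
Lemma integral_at_l13 : is_derive (fun s => l13 (gamma s)) t (hvf f (gamma t) 1 3).
Proof. exact (Hgamma (1, 3)%nat ltac:(simpl; tauto)). Qed.
Lemma integral_at_l14 : is_derive (fun s => l14 (gamma s)) t (hvf f (gamma t) 1 4).
Proof. exact (Hgamma (1, 4)%nat ltac:(simpl; tauto)). Qed.
Lemma integral_at_l23 : is_derive (fun s => l23 (gamma s)) t (hvf f (gamma t) 2 3).
Proof. exact (Hgamma (2, 3)%nat ltac:(simpl; tauto)). Qed.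
Lemma integral_at_l24 : is_derive (fun s => l24 (gamma s)) t (hvf f (gamma t) 2 4).
Proof. exact (Hgamma (2, 4)%nat ltac:(simpl; tauto)). Qed.
Lemma integral_at_l34 : is_derive (fun s => l34 (gamma s)) t (hvf f (gamma t) 3 4).
Proof. exact (Hgamma (3, 4)%nat ltac:(simpl; tauto)). Qed.

Lemma integral_at_F_L :
  is_derive (fun s => F_L (gamma s)) t
    (2 * (l12 (gamma t) * hvf f (gamma t) 1 2 + l13 (gamma t) * hvf f (gamma t) 1 3
          + l14 (gamma t) * hvf f (gamma t) 1 4)).
Proof.
  exact (is_derive_sum_sq3 _ _ _ _ _ _ _ integral_at_l12 integral_at_l13 integral_at_l14).
Qed.

Lemma integral_at_casimir : is_derive (fun s => casimir (gamma s)) t 0.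
Proof.
  rewrite <- (hvf_casimir f (gamma t)).
  exact (is_derive_plus _ _ _ _ _ integral_at_F_L
           (is_derive_sum_sq3 _ _ _ _ _ _ _ integral_at_l23 integral_at_l24 integral_at_l34)).
Qed.

End IntegralCurve.

Lemma casimir_const f gamma :
  (forall t, integral_at f gamma t) -> forall t, casimir (gamma t) = casimir (gamma 0).
Proof.
  intros Hg; apply (is_derive_0_const (fun s => casimir (gamma s))); intros t.
  exact (integral_at_casimir _ _ _ (Hg t)).
Qed.

Definition omega23 (L : L6) : R := l23 L / sqrt (1 - F_L L).
Definition omega24 (L : L6) : R := l24 L / sqrt (1 - F_L L).
Definition omega34 (L : L6) : R := l34 L / sqrt (1 - F_L L).

Lemma partial_J1 L : F_L L < 1 ->
  let s := sqrt (1 - F_L L) in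
  partial J1 L 1 2 = l12 L / s /\ partial J1 L 1 3 = l13 L / s /\
  partial J1 L 1 4 = l14 L / s /\ partial J1 L 2 3 = 0 /\
  partial J1 L 2 4 = 0 /\ partial J1 L 3 4 = 0.
Proof.
  unfold partial, J1, F_L; simpl; intros HF.
  repeat split; apply is_derive_unique; auto_derive; auto;
    rewrite ?Rmult_1_r, ?Rplus_0_r; unfold Rminus in *; try lra; field;
    apply Rgt_not_eq, sqrt_lt_R0; lra.
Qed.

Lemma hvf_J1 L : F_L L < 1 ->
  hvf J1 L 1 2 = omega23 L * l13 L + omega24 L * l14 L /\
  hvf J1 L 1 3 = - omega23 L * l12 L + omega34 L * l14 L /\
  hvf J1 L 1 4 = - omega24 L * l12 L - omega34 L * l13 L /\
  hvf J1 L 2 3 = 0 /\ hvf J1 L 2 4 = 0 /\ hvf J1 L 3 4 = 0.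
Proof.
  intros HF.
  destruct (partial_J1 L HF) as (P12 & P13 & P14 & P23 & P24 & P34).
  unfold hvf, LP, kd, ell; simpl.
  rewrite P12, P13, P14, P23, P24, P34.
  unfold omega23, omega24, omega34; repeat split; field.
  all: apply Rgt_not_eq, sqrt_lt_R0; lra.
Qed.

Lemma omega_unit L : M_h (1/2) L -> F_L L < 1 ->
  omega23 L ^ 2 + omega24 L ^ 2 + omega34 L ^ 2 = 1.
Proof.
  intros HM HF; pose proof (casimir_M_h _ _ HM) as Hc; unfold casimir in Hc.
  assert (Hs : 0 < sqrt (1 - F_L L)) by (apply sqrt_lt_R0; lra).
  assert (Hs2 : sqrt (1 - F_L L) ^ 2 = l23 L ^ 2 + l24 L ^ 2 + l34 L ^ 2)
    by (rewrite pow2_sqrt; lra).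
  unfold omega23, omega24, omega34.
  replace (_ + _ + _) with ((l23 L ^ 2 + l24 L ^ 2 + l34 L ^ 2) / sqrt (1 - F_L L) ^ 2)
    by (field; lra).
  rewrite <- Hs2; field; lra.
Qed.

Lemma omega_orthogonal L : M_h (1/2) L -> F_L L < 1 ->
  l12 L * omega34 L - l13 L * omega24 L + l14 L * omega23 L = 0.
Proof.
  intros [_ Hcas] HF.
  assert (Hs : 0 < sqrt (1 - F_L L)) by (apply sqrt_lt_R0; lra).
  unfold omega23, omega24, omega34.
  replace 0 with ((l12 L * l34 L - l13 L * l24 L + l14 L * l23 L) / sqrt (1 - F_L L))
    by (rewrite Hcas; field; lra).
  field; lra.
Qed.

Definition J1_flow (L : L6) (t : R) : L6 :=
  mkL6 (cos t * l12 L + sin t * (omega23 L * l13 L + omega24 L * l14 L))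
       (cos t * l13 L + sin t * (- omega23 L * l12 L + omega34 L * l14 L))
       (cos t * l14 L + sin t * (- omega24 L * l12 L - omega34 L * l13 L))
       (l23 L) (l24 L) (l34 L).

Lemma J1_flow_0 L : J1_flow L 0 = L.
Proof. unfold J1_flow; rewrite cos_0, sin_0; apply L6_ext; simpl; ring. Qed.

Lemma J1_flow_periodic L t : J1_flow L (t + 2 * PI) = J1_flow L t.
Proof. unfold J1_flow; rewrite cos_plus, sin_plus, cos_2PI, sin_2PI; f_equal; ring. Qed.

Lemma F_L_J1_flow L t : M_h (1/2) L -> F_L L < 1 -> F_L (J1_flow L t) = F_L L.
Proof.
  intros HM HF; unfold F_L at 1; simpl.
  apply skew_rotation_norm; [apply omega_unit | apply omega_orthogonal | ]; auto.
  rewrite <- (sin2_cos2 t); unfold Rsqr; ring.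
Qed.

Lemma omega_J1_flow L t : M_h (1/2) L -> F_L L < 1 ->
  omega23 (J1_flow L t) = omega23 L /\ omega24 (J1_flow L t) = omega24 L /\
  omega34 (J1_flow L t) = omega34 L.
Proof.
  intros HM HF; unfold omega23, omega24, omega34.
  rewrite (F_L_J1_flow L t HM HF); repeat split.
Qed.

Lemma J1_flow_integral L t : M_h (1/2) L -> F_L L < 1 -> integral_at J1 (J1_flow L) t.
Proof.
  intros HM HF ij Hij.
  assert (HFt : F_L (J1_flow L t) < 1) by (rewrite F_L_J1_flow; auto).
  destruct (hvf_J1 _ HFt) as (H12 & H13 & H14 & H23 & H24 & H34).
  destruct (omega_J1_flow L t HM HF) as (E23 & E24 & E34).
  rewrite E23, E24 in H12; rewrite E23, E34 in H13; rewrite E24, E34 in H14.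
  pose proof (omega_unit L HM HF) as Hunit; pose proof (omega_orthogonal L HM HF) as Horth.
  revert H12 H13 H14 H23 H24 H34 Hunit Horth; unfold J1_flow; simpl.
  generalize (omega23 L) (omega24 L) (omega34 L).
  intros p q r H12 H13 H14 H23 H24 H34 Hunit Horth.
  destruct L as [x y z a b c]; simpl in *.
  destruct Hij as [<- | [<- | [<- | [<- | [<- | [<- | []]]]]]]; simpl;
    [rewrite H12 | rewrite H13 | rewrite H14 | rewrite H23 | rewrite H24 | rewrite H34];
    auto_derive; auto; nsatz.
Qed.

Lemma J1_flow_M_h L t : M_h (1/2) L -> F_L L < 1 -> M_h (1/2) (J1_flow L t).
Proof.
  intros HM HF; pose proof (casimir_M_h _ _ HM) as Hnorm.
  unfold casimir in Hnorm; rewrite <- (F_L_J1_flow L t HM HF) in Hnorm.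
  destruct HM as [_ Hcas]; split.
  - unfold F_L in Hnorm; simpl in Hnorm |- *; lra.
  - simpl; unfold omega23, omega24, omega34.
    rewrite <- (Rmult_0_r (cos t)), <- Hcas; field.
    apply Rgt_not_eq, sqrt_lt_R0; lra.
Qed.

(* [J1] is not differentiable where [F_L = 1], so [hvf J1] is junk there; but such
   points are maxima of [F_L] along the curve since [casimir] is conserved. *)
Lemma J1_curve_F_L_const gamma :
  (forall t, integral_at J1 gamma t) -> casimir (gamma 0) = 1 ->
  forall t, F_L (gamma t) = F_L (gamma 0).
Proof.
  intros Hg Hc; apply (is_derive_0_const (fun s => F_L (gamma s))); intros t.
  pose proof (integral_at_F_L _ _ _ (Hg t)) as Hd.
  destruct (Rlt_le_dec (F_L (gamma t)) 1) as [HF | HF].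
  - destruct (hvf_J1 _ HF) as (H12 & H13 & H14 & _).
    rewrite H12, H13, H14 in Hd.
    match type of Hd with is_derive _ _ ?v => replace 0 with v by ring; exact Hd end.
  - assert (Hmax : forall s, F_L (gamma s) <= F_L (gamma t)).
    { intros s; rewrite <- Hc, <- (casimir_const _ _ Hg s) in *.
      pose proof (F_L_le_casimir (gamma s)); pose proof (F_L_le_casimir (gamma t)).
      lra. }
    rewrite (is_derive_at_max _ _ _ Hd Hmax) in Hd; exact Hd.
Qed.

Lemma J1_curve_skew gamma :
  (forall t, integral_at J1 gamma t) -> casimir (gamma 0) = 1 -> F_L (gamma 0) < 1 ->
  (forall t, l23 (gamma t) = l23 (gamma 0) /\ l24 (gamma t) = l24 (gamma 0) /\
             l34 (gamma t) = l34 (gamma 0)) /\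
  skew_solution (omega23 (gamma 0)) (omega24 (gamma 0)) (omega34 (gamma 0))
    (fun t => l12 (gamma t)) (fun t => l13 (gamma t)) (fun t => l14 (gamma t)).
Proof.
  intros Hg Hc HF0.
  pose proof (J1_curve_F_L_const gamma Hg Hc) as HF.
  assert (Hhvf : forall t, F_L (gamma t) < 1) by (intros t; rewrite HF; exact HF0).
  assert (Hw : forall t, l23 (gamma t) = l23 (gamma 0) /\ l24 (gamma t) = l24 (gamma 0) /\
                         l34 (gamma t) = l34 (gamma 0)).
  { intros t; repeat split; revert t; apply is_derive_0_const; intros t;
      destruct (hvf_J1 _ (Hhvf t)) as (_ & _ & _ & H23 & H24 & H34).
    - rewrite <- H23; exact (integral_at_l23 _ _ _ (Hg t)).
    - rewrite <- H24; exact (integral_at_l24 _ _ _ (Hg t)).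
    - rewrite <- H34; exact (integral_at_l34 _ _ _ (Hg t)). }
  split; [exact Hw |]; intros t.
  destruct (hvf_J1 _ (Hhvf t)) as (H12 & H13 & H14 & _).
  destruct (Hw t) as (E23 & E24 & E34).
  unfold omega23, omega24, omega34 in H12, H13, H14 |- *.
  rewrite HF, E23, E24 in H12; rewrite HF, E23, E34 in H13; rewrite HF, E24, E34 in H14.
  split; [|split].
  - rewrite <- H12; exact (integral_at_l12 _ _ _ (Hg t)).
  - rewrite <- H13; exact (integral_at_l13 _ _ _ (Hg t)).
  - rewrite <- H14; exact (integral_at_l14 _ _ _ (Hg t)).
Qed.

Lemma J1_curve_unique gamma delta :
  (forall t, integral_at J1 gamma t) -> (forall t, integral_at J1 delta t) ->
  delta 0 = gamma 0 -> casimir (gamma 0) = 1 -> F_L (gamma 0) < 1 ->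
  forall t, delta t = gamma t.
Proof.
  intros Hg Hd E Hc HF t.
  destruct (J1_curve_skew gamma Hg Hc HF) as [Wg Sg].
  destruct (J1_curve_skew delta Hd ltac:(rewrite E; exact Hc) ltac:(rewrite E; exact HF))
    as [Wd Sd].
  rewrite E in Wd, Sd.
  destruct (skew_solution_unique _ _ _ _ _ _ _ _ _ Sd Sg
              (f_equal l12 E) (f_equal l13 E) (f_equal l14 E) t) as (E12 & E13 & E14).
  destruct (Wg t) as (G23 & G24 & G34); destruct (Wd t) as (D23 & D24 & D34).
  apply L6_ext; auto; congruence.
Qed.

Theorem lemma13 (f1 f2 f3 h : R) :
  0 < f1 -> f1 < f2 -> f2 < f3 -> 2 * h = 1 ->
  almost_global_S1 h J1 (fun L => F_L L = 1).
Proof.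
  (* The conditions on the f_i only concern G_L. *)
  intros _ _ _ Hh; replace h with (1/2) by lra; intros L0 HM HS.
  pose proof (casimir_M_h _ _ HM) as Hc; replace (2 * (1/2)) with 1 in Hc by field.
  assert (HF : F_L L0 < 1) by (pose proof (F_L_le_casimir L0); lra).
  assert (Hflow : forall t, integral_at J1 (J1_flow L0) t)
    by (intros t; apply J1_flow_integral; auto).
  exists (J1_flow L0); split; [|split; [|split; [|split]]].
  - apply J1_flow_0.
  - exact Hflow.
  - intros t; split; [apply J1_flow_M_h; auto|].
    rewrite F_L_J1_flow by auto; lra.
  - apply J1_flow_periodic.
  - intros delta Hd0 Hdelta; apply J1_curve_unique; rewrite ?J1_flow_0; auto.
Qed.
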